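(* For every positive integer $n$ and every $k\le n$ there exists an instance of the myopic best-response dynamics described below (a graph with nonnegative embedding weights, features, a linear threshold classifier, and a scaled 2-norm cost) in which $n-k$ users move at round $k$.
   Context: Users $i$ have features $x_i\in\mathbb{R}^\ell$; embeddings $\phi(x_i;x_{-i})=\widetilde{w}_{ii}x_i+\sum_{j\neq i}\widetilde{w}_{ji}x_j$ with $\widetilde{w}_{ji}\ge0$. Classifier: $h_{\theta,b}(x_i;x_{-i})=\mathrm{sign}(\theta^\top\phi(x_i;x_{-i})+b)$, $\mathrm{sign}(0)=+1$. Cost $c_\beta(x,x')=\beta\|x-x'\|_2$ for some $\beta>0$. Dynamics: $x_i^{(0)}=x_i$; at each round $t\ge1$ all users update concurrently; user $i$ changes her features only if she is currently classified $-1$ and some $x'$ with $h(x';x^{(t-1)}_{-i})=+1$ has $c_\beta(x_i^{(t-1)},x')\le2$, in which case she moves to the minimum-cost such point (embedding exactly on the decision boundary); otherwise she stays. User $i$ ''moves at round $t$'' if $x_i^{(t)}\neq x_i^{(t-1)}$. *)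

From Stdlib Require Import Reals.
From mathcomp Require Import all_boot all_order all_algebra.
From mathcomp Require Import Rstruct.

Set Implicit Arguments.
Unset Strict Implicit.
Unset Printing Implicit Defensive.

Import Order.TTheory GRing.Theory Num.Theory.
Local Open Scope ring_scope.

Definition profile (n l : nat) := 'I_n -> 'rV[R]_l.

Definition dotp (l : nat) (u v : 'rV[R]_l) : R := \sum_(j < l) u 0 j * v 0 j.
Definition enorm (l : nat) (v : 'rV[R]_l) : R := Num.sqrt (\sum_(j < l) v 0 j ^+ 2).

Definition cost (l : nat) (beta : R) (x x' : 'rV[R]_l) : R := beta * enorm (x - x').

(* Embedding phi(x_i; x_{-i}) = sum_j w j i * x_j, where w i i is the
   self-weight \tilde w_{ii} and w j i the weight \tilde w_{ji}. *)
Definition embed (n l : nat) (w : 'I_n -> 'I_n -> R) (X : profile n l) (i : 'I_n)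
  : 'rV[R]_l := \sum_(j < n) w j i *: X j.

(* Classifier h_{theta,b}: true means +1, false means -1 (sign(0) = +1). *)
Definition classif (n l : nat) (w : 'I_n -> 'I_n -> R) (theta : 'rV[R]_l) (b : R)
  (X : profile n l) (i : 'I_n) : bool :=
  0 <= dotp theta (embed w X i) + b.

Definition upd (n l : nat) (X : profile n l) (i : 'I_n) (x' : 'rV[R]_l) : profile n l :=
  fun j => if j == i then x' else X j.

Definition feasible (n l : nat) (w : 'I_n -> 'I_n -> R) (theta : 'rV[R]_l) (b beta : R)
  (X : profile n l) (i : 'I_n) (x' : 'rV[R]_l) : Prop :=
  classif w theta b (upd X i x') i /\ cost beta (X i) x' <= 2.

Definition br_step (n l : nat) (w : 'I_n -> 'I_n -> R) (theta : 'rV[R]_l) (b beta : R)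
  (X Y : profile n l) : Prop :=
  forall i : 'I_n,
    if classif w theta b X i then Y i = X i
    else
      ((exists x', feasible w theta b beta X i x') ->
          classif w theta b (upd X i (Y i)) i /\
          cost beta (X i) (Y i) <= 2 /\
          (forall x', classif w theta b (upd X i x') i ->
                      cost beta (X i) (Y i) <= cost beta (X i) x'))
      /\ (~ (exists x', feasible w theta b beta X i x') -> Y i = X i).

Definition is_run (n l : nat) (w : 'I_n -> 'I_n -> R) (theta : 'rV[R]_l) (b beta : R)
  (X0 : profile n l) (traj : nat -> profile n l) : Prop :=
  traj 0%N = X0 /\ forall t : nat, br_step w theta b beta (traj t) (traj t.+1).

Definition movers (n l : nat) (traj : nat -> profile n l) (t : nat) : nat :=
  #|[set i : 'I_n | traj t i != traj t.-1 i]|.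

(* Over one-dimensional features with threshold 0, unit cost and unit
   self-weights, the best response of a user is a deterministic function of
   her own feature x and of the weighted features r of her neighbours: she
   stays if x + r >= 0, jumps to -r if -2 <= x + r < 0, and is stuck otherwise.
   Arrange the users so that user 0 is a root at feature 0, users 1, ..., k-1
   form a path hanging from it and every user i >= k hangs from user k-1, all
   non-root users starting at feature -2.  A user whose parent sits at 0 scores
   exactly -2 and moves to 0, while a user whose parent sits at -2 scores -4
   and cannot move, so the level min(i, k) is the round at which user i moves:
   at round k exactly the n - k users i >= k move. *)
From Stdlib Require Import Reals FunctionalExtensionality.
From mathcomp Require Import all_boot all_order all_algebra.
From mathcomp Require Import Rstruct zify lra.
Import Order.TTheory GRing.Theory Num.Theory.
Local Open Scope ring_scope.

Set Implicit Arguments.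
Unset Strict Implicit.

Lemma card_ord_geq (n k : nat) : #|[set i : 'I_n | (k <= i)%N]| = (n - k)%N.
Proof.
rewrite cardsE -sum1_card.
have := @big_geq_mkord _ 0%N addn k n xpredT (fun=> 1%N).
rewrite sum_nat_const_nat muln1 => ->.
by apply: eq_bigl => i.
Qed.

Lemma rV1P (u v : 'rV[R]_1) : u = v <-> u 0 0 = v 0 0.
Proof. by split=> [-> // | e]; apply/rowP => j; rewrite ord1. Qed.

Lemma cost1 (x y : 'rV[R]_1) : cost 1 x y = `|x 0 0 - y 0 0|.
Proof. by rewrite /cost /enorm big_ord1 sqrtr_sqr !mxE Rmult_1_l. Qed.

Definition best_response (x r : R) : R :=
  if (x + r < 0) && (-2 <= x + r) then - r else x.

Lemma best_response_stay (x r : R) : 0 <= x + r -> best_response x r = x.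
Proof. by rewrite /best_response => pos; rewrite ltNge pos. Qed.

Lemma best_response_move (x r : R) :
  x + r < 0 -> -2 <= x + r -> best_response x r = - r.
Proof. by rewrite /best_response => -> ->. Qed.

Lemma best_response_stuck (x r : R) : x + r < -2 -> best_response x r = x.
Proof. by rewrite /best_response => high; rewrite (leNgt (-2)) high andbF. Qed.

Section OneDimensional.
Variables (n : nat) (w : 'I_n -> 'I_n -> R).
Hypothesis w_self : forall i, w i i = 1.

Local Notation theta := (const_mx 1 : 'rV[R]_1).

Definition others (X : profile n 1) (i : 'I_n) : R :=
  \sum_(j | j != i) w j i * X j 0 0.

Lemma classif1 (X : profile n 1) i :
  classif w theta 0 X i = (0 <= X i 0 0 + others X i).
Proof.
rewrite /classif /dotp big_ord1 addr0 !mxE mul1r /embed summxE (bigD1 i) //=.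
by rewrite !mxE w_self mul1r; under eq_bigr do rewrite mxE.
Qed.

Lemma others_upd (X : profile n 1) i x : others (upd X i x) i = others X i.
Proof. by apply: eq_bigr => j /negbTE ji; rewrite /upd ji. Qed.

Lemma classif1_upd (X : profile n 1) i x :
  classif w theta 0 (upd X i x) i = (0 <= x 0 0 + others X i).
Proof. by rewrite classif1 others_upd /upd eqxx. Qed.

Lemma feasible1 (X : profile n 1) i x :
  feasible w theta 0 1 X i x <->
  0 <= x 0 0 + others X i /\ `|X i 0 0 - x 0 0| <= 2.
Proof. by rewrite /feasible classif1_upd cost1. Qed.

Lemma exists_feasible (X : profile n 1) i :
  (exists x, feasible w theta 0 1 X i x) <-> -2 <= X i 0 0 + others X i.
Proof.
split=> [[x /feasible1 [pos]] | low].
  by rewrite ler_norml; lra.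
have [pos | neg] := lerP 0 (X i 0 0 + others X i).
  by exists (X i); apply/feasible1; rewrite subrr normr0; split=> //; lra.
exists (const_mx (- others X i)); apply/feasible1.
by rewrite mxE addNr opprK ler_norml; split=> //; lra.
Qed.

Lemma br_step_coord (X Y : profile n 1) :
  br_step w theta 0 1 X Y <->
  forall i, Y i 0 0 = best_response (X i 0 0) (others X i).
Proof.
rewrite /br_step /best_response; split=> H i; have := H i; rewrite classif1.
- case: lerP => [pos /rV1P -> // | neg].
  case: (lerP (-2)) => [low [moves _] | high [_ stuck]] /=.
    have [above [_ minimal]] := moves (proj2 (exists_feasible X i) low).
    rewrite classif1_upd in above.
    have := minimal (const_mx (- others X i)); rewrite classif1_upd !cost1 mxE.
    rewrite addNr lexx opprK (ltr0_norm neg) => /(_ isT).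
    by rewrite ler_norml; lra.
  by rewrite stuck // => /exists_feasible; lra.
- case: lerP => [pos | neg] Yi; first exact/rV1P.
  move: Yi; case: (lerP (-2)) => [low | high] /= Yi.
    split=> [_ | []]; last exact/exists_feasible.
    rewrite classif1_upd cost1 Yi addNr lexx; split=> //; split.
      by rewrite opprK ler_norml; lra.
    move=> x'; rewrite classif1_upd cost1 => above.
    by rewrite opprK (ltr0_norm neg) ler_normr; lra.
  by split=> [/exists_feasible | _]; [lra | apply/rV1P].
Qed.

Definition br_map (X : profile n 1) : profile n 1 :=
  fun i => const_mx (best_response (X i 0 0) (others X i)).

Lemma br_stepP (X Y : profile n 1) : br_step w theta 0 1 X Y <-> Y = br_map X.
Proof.
rewrite br_step_coord; split=> [coord | -> i]; last by rewrite mxE.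
by apply: functional_extensionality => i; apply/rV1P; rewrite mxE.
Qed.

Lemma is_runP (X0 : profile n 1) traj :
  is_run w theta 0 1 X0 traj <-> forall t, traj t = iter t br_map X0.
Proof.
split=> [[start step] | run].
  by elim=> [|t IH] //=; rewrite -IH; apply/br_stepP.
by split=> [|t]; [exact: run 0%N | apply/br_stepP; rewrite !run].
Qed.

End OneDimensional.

Section Chain.
Variables (n k : nat).

Definition chain_level (i : 'I_n) : nat := minn i k.

(* User 0 is its own parent; its self-loop merges with the self-weight. *)
Definition chain_parent (i : 'I_n) : 'I_n :=
  Ordinal (leq_ltn_trans (leq_trans (leq_pred _) (geq_minl i k)) (ltn_ord i)).

Definition chain_weight (j i : 'I_n) : R :=
  ((j == i) || (j == chain_parent i))%:R.

Definition chain_value (t : nat) (i : 'I_n) : R :=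
  if (chain_level i <= t)%N then 0 else -2.

Definition chain_profile (t : nat) : profile n 1 :=
  fun i => const_mx (chain_value t i).

Lemma chain_weight_self i : chain_weight i i = 1.
Proof. by rewrite /chain_weight eqxx. Qed.

Lemma chain_level_parent i : chain_level (chain_parent i) = (chain_level i).-1.
Proof. by rewrite /chain_level /=; lia. Qed.

Lemma chain_parent_root i : chain_parent i = i -> chain_level i = 0%N.
Proof. by move/(congr1 val); rewrite /chain_level /=; lia. Qed.

Lemma others_chain (X : profile n 1) i :
  others chain_weight X i =
  if chain_parent i == i then 0 else X (chain_parent i) 0 0.
Proof.
rewrite /others /chain_weight; under eq_bigr => j /negbTE -> do rewrite orFb.
case: eqP => [root | /eqP parent_ne].
  by rewrite big1 // => j ji; rewrite root (negbTE ji) mul0r.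
rewrite (bigD1 (chain_parent i)) //= eqxx mul1r big1 ?addr0 //.
by move=> j /andP[_ /negbTE ->]; rewrite mul0r.
Qed.

Lemma others_chain_profile t i :
  others chain_weight (chain_profile t) i = chain_value t.+1 i.
Proof.
rewrite others_chain mxE /chain_value.
case: eqP => [/chain_parent_root -> // | _].
by rewrite chain_level_parent; case: (chain_level i).
Qed.

Lemma chain_br_map t : br_map chain_weight (chain_profile t) = chain_profile t.+1.
Proof.
apply: functional_extensionality => i; apply/rV1P.
rewrite !mxE others_chain_profile /chain_value.
have [le_t | gt_t] := leqP (chain_level i) t.
  by rewrite (leq_trans le_t) // best_response_stay // addr0.
case: leqP => [arrived | far].
  by rewrite best_response_move ?oppr0 // addr0; lra.
by rewrite best_response_stuck //; lra.
Qed.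

Lemma chain_run t :
  iter t (br_map chain_weight) (chain_profile 0) = chain_profile t.
Proof. by elim: t => //= t ->; rewrite chain_br_map. Qed.

Lemma chain_movers : (0 < k)%N ->
  [set i | chain_profile k i != chain_profile k.-1 i] =
  [set i : 'I_n | (k <= i)%N].
Proof.
move=> k_gt0; apply/setP => i; rewrite !inE /chain_profile /chain_value.
rewrite /chain_level geq_minr.
have [le_ki | lt_ik] := leqP k i.
  rewrite leqNgt ltn_predL k_gt0 /=.
  by apply/eqP => /rV1P; rewrite !mxE; lra.
by rewrite (_ : (i <= k.-1)%N) ?eqxx //; lia.
Qed.

End Chain.

Theorem proposition4 (n k : nat) :
  (0 < n)%N -> (1 <= k)%N -> (k <= n)%N ->
  exists (l : nat) (w : 'I_n -> 'I_n -> R) (X0 : profile n l)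
         (theta : 'rV[R]_l) (b beta : R),
    (forall i j : 'I_n, 0 <= w i j) /\ 0 < beta /\
    (exists traj : nat -> profile n l, is_run w theta b beta X0 traj) /\
    (forall traj : nat -> profile n l, is_run w theta b beta X0 traj ->
       movers traj k = (n - k)%N).
Proof.
move=> _ k_gt0 _.
have self := @chain_weight_self n k.
exists 1%N, (chain_weight k), (chain_profile k 0), (const_mx 1), 0, 1.
split; first by move=> i j; rewrite ler0n.
split; first exact: ltr01.
split.
  by exists (chain_profile k); apply/(is_runP self) => t; rewrite chain_run.
move=> traj /(is_runP self) run.
by rewrite /movers !run !chain_run chain_movers // card_ord_geq.
Qed.
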